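(* Suppose the e-values are valid, i.e. $\mathbb{E}[e_t\mid\mathcal{F}_{t-1}]\le1$ a.s. whenever $\theta_t=0$. Fix $d\in(0,1]$ and define the oracle estimate of the decaying-memory FDP $$\mathrm{mem\text{-}FDP}^*(t)=\sum_{j\in\mathcal{H}_0(t)}\frac{\alpha_j}{d\,R^{\mathrm d}_{j-1}+1}.$$ Then for every $t\ge1$: if $\mathbb{E}[\mathrm{mem\text{-}FDP}^*(t)]\le\alpha$, then $\mathrm{mem\text{-}FDR}(t)\le\alpha$.
   Context: Let $\alpha\in(0,1)$ be a target level. Hypotheses are indexed by $t=1,2,\dots$; $\theta_t\in\{0,1\}$ is a fixed (non-random) indicator with $\theta_t=0$ iff the $t$-th null hypothesis is true. $e_1,e_2,\dots$ are nonnegative random variables (e-values). Testing levels $\alpha_1,\alpha_2,\dots$ are nonnegative random variables and the decisions are $\delta_t=\mathbb{1}\{e_t\ge 1/\alpha_t\}$ (with $\delta_t=0$ when $\alpha_t=0$). Let $\mathcal{F}_t=\sigma(\delta_1,\dots,\delta_t)$, $\mathcal{F}_0$ trivial; each $\alpha_t$ is required to be $\mathcal{F}_{t-1}$-measurable. $\mathcal{H}_0(t)=\{j\le t:\theta_j=0\}$. For a decay parameter $d\in(0,1]$, $R^{\mathrm d}_t=\sum_{j=1}^t d^{t-j}\delta_j$ with $R^{\mathrm d}_0=0$, and the decaying-memory FDR is $\mathrm{mem\text{-}FDR}(t)=\mathbb{E}\big[\sum_{j\in\mathcal{H}_0(t)}d^{t-j}\delta_j\big/R^{\mathrm d}_t\big]$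 with the convention $0/0=0$. *)

From HB Require Import structures.
From mathcomp Require Import all_boot all_order all_algebra.
From mathcomp Require Import all_classical all_reals all_analysis.
Set Implicit Arguments. Unset Strict Implicit. Unset Printing Implicit Defensive.
Import Order.TTheory GRing.Theory Num.Theory.
Local Open Scope classical_set_scope.
Local Open Scope ring_scope.

(* Hypotheses are indexed by t = 1,2,...; index 0 of the sequences is unused. *)
Section OnlineFDR.
Context {T : Type} {R : realType}.

Definition delta (e alpha : nat -> T -> R) (t : nat) (x : T) : bool :=
  if alpha t x == 0 then false else (alpha t x)^-1 <= e t x.

Definition Rdec (d : R) (e alpha : nat -> T -> R) (t : nat) (x : T) : R :=
  \sum_(1 <= j < t.+1) d ^+ (t - j) * (delta e alpha j x)%:R.

(* F_t = sigma(delta_1, ..., delta_t): since the delta_j are boolean, these are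
   exactly the preimages of arbitrary sets of boolean sequences under
   x |-> (delta_1 x, ..., delta_t x).  F_0 = {set0, setT} is trivial. *)
Definition Fsets (e alpha : nat -> T -> R) (t : nat) : set (set T) :=
  [set A | exists S : set (seq bool),
     A = (fun x => [seq delta e alpha j x | j <- iota 1 t]) @^-1` S].

(* numerator of the decaying-memory FDP: sum over nulls j <= t (theta j = false) *)
Definition memV (d : R) (theta : nat -> bool) (e alpha : nat -> T -> R)
  (t : nat) (x : T) : R :=
  \sum_(1 <= j < t.+1 | ~~ theta j) d ^+ (t - j) * (delta e alpha j x)%:R.

(* decaying-memory FDP, with 0/0 = 0 (MathComp's 0^-1 = 0) *)
Definition memFDP (d : R) theta e alpha t x : R :=
  memV d theta e alpha t x / Rdec d e alpha t x.

Definition memFDPstar (d : R) (theta : nat -> bool) (e alpha : nat -> T -> R)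
  (t : nat) (x : T) : R :=
  \sum_(1 <= j < t.+1 | ~~ theta j)
     alpha j x / (d * Rdec d e alpha j.-1 x + 1).

End OnlineFDR.

From HB Require Import structures.
From mathcomp Require Import all_boot all_order all_algebra.
From mathcomp Require Import all_classical all_reals all_analysis.
From mathcomp Require Import measurable_realfun.
Set Implicit Arguments.
Unset Strict Implicit.
Unset Printing Implicit Defensive.
Import Order.TTheory GRing.Theory Num.Theory.
Local Open Scope classical_set_scope.
Local Open Scope ring_scope.

(* For a null index j, the j-th summand of mem-FDP(t) is at most
   alpha_j e_j / (d R^d_(j-1) + 1): it vanishes unless delta_j = 1, in which
   case alpha_j e_j >= 1 and R^d_t >= d^(t-j) (d R^d_(j-1) + 1).  The factor
   alpha_j / (d R^d_(j-1) + 1) is F_(j-1)-measurable and nonnegative, so the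
   validity of e_j bounds the expectation of that summand by the expectation
   of alpha_j / (d R^d_(j-1) + 1); summing over the nulls j <= t gives
   mem-FDR(t) <= E[mem-FDP^*(t)]. *)

Section History.
Context {T : Type} {R : realType} (e alpha : nat -> T -> R).

Definition history (n : nat) (x : T) : seq bool :=
  [seq delta e alpha j x | j <- iota 1 n].

Lemma historyS n x :
  history n.+1 x = rcons (history n x) (delta e alpha n.+1 x).
Proof. by rewrite /history -(addn1 n) iotaD map_cat -cats1 /= add1n addn1. Qed.

Definition history_determined {U : Type} (n : nat) (f : T -> U) :=
  forall x y, history n x = history n y -> f x = f y.

Lemma delta_history_determined n j : (1 <= j <= n)%N ->
  history_determined n (delta e alpha j).
Proof.
move=> /andP[j_gt0 jn] x y hxy; have := congr1 (nth false ^~ j.-1) hxy.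
by rewrite /= !(nth_map 0%N) ?size_iota ?prednK // nth_iota ?prednK // add1n prednK.
Qed.

Lemma sum_indic_history n x :
  \sum_(s : n.-tuple bool) \1_(history n @^-1` [set val s]) x = 1 :> R.
Proof.
have size_hx : size (history n x) == n by rewrite size_map size_iota.
rewrite (bigD1 (Tuple size_hx)) //= indicE mem_set // big1 ?addr0 // => s hs.
rewrite indicE memNset //= => hxs; move: hs; apply/negP; rewrite negbK.
by apply/eqP/val_inj; rewrite /= hxs.
Qed.

Lemma alpha_history_determined j :
  (forall B : set R, measurable B -> Fsets e alpha j.-1 (alpha j @^-1` B)) ->
  history_determined j.-1 (alpha j).
Proof.
move=> halpha x y hxy; have [S hS] := halpha _ (measurable_set1 (alpha j x)).
have hx : (alpha j @^-1` [set alpha j x]) x by [].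
have : (alpha j @^-1` [set alpha j x]) y.
  by rewrite hS in hx *; change (S (history j.-1 y)); rewrite -hxy.
by move=> /= ->.
Qed.

Lemma deltaE t x : 0 <= alpha t x ->
  delta e alpha t x = (alpha t x != 0) && (1 <= alpha t x * e t x).
Proof.
move=> alpha_ge0; rewrite /delta; case: eqP => //= /eqP alpha_neq0.
have alpha_gt0 : 0 < alpha t x by rewrite lt_def alpha_neq0.
by rewrite -[LHS](ler_pM2l alpha_gt0) mulfV.
Qed.

Variable d : R.

Lemma Rdec_recr n x :
  Rdec d e alpha n.+1 x = d * Rdec d e alpha n x + (delta e alpha n.+1 x)%:R.
Proof.
rewrite /Rdec big_nat_recr //= subnn expr0 mul1r mulr_sumr; congr (_ + _).
by apply: eq_big_nat => i /andP[_ ilt]; rewrite subSn // exprS mulrA.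
Qed.

Lemma Rdec_history_determined n m : (m <= n)%N ->
  history_determined n (Rdec d e alpha m).
Proof.
move=> mn x y hxy; apply: eq_big_nat => i /andP[i_gt0 im].
by rewrite (delta_history_determined _ hxy) // i_gt0 (leq_trans _ mn).
Qed.

Hypothesis d_ge0 : 0 <= d.

Lemma Rdec_ge0 n x : 0 <= Rdec d e alpha n x.
Proof. by apply: sumr_ge0 => i _; rewrite mulr_ge0 ?exprn_ge0. Qed.

Lemma Rdec_decay_le j t x : (j <= t)%N ->
  d ^+ (t - j) * Rdec d e alpha j x <= Rdec d e alpha t x.
Proof.
elim: t => [|t IH]; first by rewrite leqn0 => /eqP ->; rewrite mul1r.
rewrite leq_eqVlt => /orP[/eqP ->|]; first by rewrite subnn mul1r.
rewrite ltnS => jt; rewrite subSn // exprS -mulrA Rdec_recr.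
by rewrite ler_wpDr // ler_wpM2l // IH.
Qed.

Lemma Rdec_denom_gt0 n x : 0 < d * Rdec d e alpha n x + 1.
Proof. by rewrite ltr_wpDl // mulr_ge0 // Rdec_ge0. Qed.

Lemma memFDP_term_le t j x : 0 <= alpha j x -> 0 <= e j x -> (1 <= j <= t)%N ->
  d ^+ (t - j) * (delta e alpha j x)%:R / Rdec d e alpha t x <=
  alpha j x * e j x / (d * Rdec d e alpha j.-1 x + 1).
Proof.
move=> alpha_ge0 e_ge0 /andP[j_gt0 jt].
have denom_gt0 := Rdec_denom_gt0 j.-1 x.
case rej: (delta e alpha j x); last first.
  by rewrite mulr0n mulr0 mul0r divr_ge0 ?mulr_ge0 // ltW.
have /andP[_ ae_ge1] : (alpha j x != 0) && (1 <= alpha j x * e j x).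
  by rewrite -deltaE.
have := Rdec_decay_le x jt; rewrite -[in Rdec _ _ _ j](prednK j_gt0) Rdec_recr.
rewrite prednK // rej mulr1n => Rt_ge.
have [dk0|dk_neq0] := eqVneq (d ^+ (t - j)) 0.
  by rewrite dk0 !mul0r divr_ge0 ?mulr_ge0 // ltW.
have dk_gt0 : 0 < d ^+ (t - j) by rewrite lt_def dk_neq0 exprn_ge0.
rewrite mulr1; apply: (@le_trans _ _
  (d ^+ (t - j) / (d ^+ (t - j) * (d * Rdec d e alpha j.-1 x + 1)))).
  by rewrite ler_wpM2l ?(ltW dk_gt0) // lef_pV2 ?posrE ?(lt_le_trans _ Rt_ge) ?mulr_gt0.
by rewrite invfM mulrA mulfV ?gt_eqF // ler_wpM2r // invr_ge0 ltW.
Qed.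

Lemma memFDP_history_determined theta t :
  history_determined t (memFDP d theta e alpha t).
Proof.
move=> x y hxy; rewrite /memFDP /memV (Rdec_history_determined (leqnn t) hxy).
rewrite big_nat_cond [in RHS]big_nat_cond; congr (_ / _).
apply: eq_bigr => i /andP[/andP[i_gt0 it] _].
by rewrite (delta_history_determined _ hxy) // i_gt0.
Qed.

Lemma memFDP_ge0 theta t x : 0 <= memFDP d theta e alpha t x.
Proof.
apply: divr_ge0; last exact: Rdec_ge0.
by apply: sumr_ge0 => i _; rewrite mulr_ge0 ?exprn_ge0.
Qed.

Lemma memFDP_le_sum theta t x :
  (forall j, 0 <= alpha j x) -> (forall j, 0 <= e j x) ->
  memFDP d theta e alpha t x <=
  \sum_(1 <= j < t.+1 | ~~ theta j) alpha j x / (d * Rdec d e alpha j.-1 x + 1) * e j x.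
Proof.
move=> alpha_ge0 e_ge0; rewrite /memFDP /memV mulr_suml big_nat_cond [in leRHS]big_nat_cond.
by apply: ler_sum => j /andP[jt _]; rewrite [leRHS]mulrAC; apply: memFDP_term_le.
Qed.

End History.

Section HistoryMeasurability.
Context {R : realType} {dT : measure_display} {T : measurableType dT}.
Variables e alpha : nat -> T -> R.

Lemma measurable_history_preimage n :
  (forall j, (1 <= j <= n)%N -> measurable [set x | delta e alpha j x]) ->
  forall S : set (seq bool), measurable (history e alpha n @^-1` S).
Proof.
elim: n => [_ S|n IHn mdelta S].
  have [S0|S0] := pselect (S [::]).
  - by rewrite (_ : _ @^-1` S = setT) //; apply/seteqP; split.
  - by rewrite (_ : _ @^-1` S = set0) //; apply/seteqP; split.
pose D := [set x | delta e alpha n.+1 x].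
have mD : measurable D by apply: mdelta; rewrite /= leqnn.
have mdelta_n j : (1 <= j <= n)%N -> measurable [set x | delta e alpha j x].
  by case/andP=> j_gt0 jn; apply: mdelta; rewrite j_gt0 ltnW.
rewrite (_ : _ @^-1` S =
    (history e alpha n @^-1` [set s | S (rcons s true)] `&` D) `|`
    (history e alpha n @^-1` [set s | S (rcons s false)] `&` ~` D)).
  have mpre := IHn mdelta_n.
  by apply: measurableU; apply: measurableI => //; exact: measurableC.
apply/seteqP; split => x /=; rewrite historyS /D /=.
  by case: (delta e alpha n.+1 x) => Sx; [left|right].
by case: (delta e alpha n.+1 x) => -[] [].
Qed.

Lemma measurable_fun_history n d' (U : measurableType d') (f : T -> U) :
  (forall j, (1 <= j <= n)%N -> measurable [set x | delta e alpha j x]) ->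
  history_determined e alpha n f ->
  measurable_fun setT f.
Proof.
move=> mdelta fh _ B _; rewrite setTI (_ : f @^-1` B = history e alpha n @^-1`
  [set s | exists2 x, history e alpha n x = s & B (f x)]).
  exact: measurable_history_preimage.
apply/seteqP; split => x /=; first by exists x.
by case=> y hyx By; rewrite (fh x y (esym hyx)).
Qed.

Hypothesis me : forall t, measurable_fun setT (e t).
Hypothesis alpha_ge0 : forall t x, 0 <= alpha t x.
Hypothesis halpha : forall t, (1 <= t)%N ->
  forall B : set R, measurable B -> Fsets e alpha t.-1 (alpha t @^-1` B).

Lemma measurable_delta j : (1 <= j)%N -> measurable [set x | delta e alpha j x].
Proof.
elim/ltn_ind: j => j IH j_gt0.
have mdelta_prev i : (1 <= i <= j.-1)%N -> measurable [set x | delta e alpha i x].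
  by case/andP=> i_gt0 ij; apply: IH; rewrite // -(prednK j_gt0) ltnS.
have malpha : measurable_fun setT (alpha j).
  exact: measurable_fun_history mdelta_prev (alpha_history_determined (halpha j_gt0)).
have mdeltaf : measurable_fun setT (delta e alpha j).
  rewrite (_ : delta e alpha j = fun x => (alpha j x != 0) && (1 <= alpha j x * e j x)).
    apply: measurable_and.
      by apply: measurable_neg; apply: measurable_fun_eqr => //; exact: measurable_cst.
    by apply: measurable_fun_ler; [exact: measurable_cst | exact: measurable_funM].
  by apply/funext => x; rewrite deltaE.
by have := mdeltaf measurableT [set true] I; rewrite setTI.
Qed.

End HistoryMeasurability.

Section ValidIntegral.
Context {R : realType} {dT : measure_display} {T : measurableType dT}.
Variable mu : {measure set T -> \bar R}.
Local Open Scope ereal_scope.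

Lemma integral_indic_mul_le (A : set T) (f E : T -> R) :
  measurable A -> measurable_fun setT E ->
  (forall x, 0 <= E x)%R -> (forall x, 0 <= f x)%R ->
  (forall x y, A x -> A y -> f x = f y) ->
  \int[mu]_(x in A) (E x)%:E <= mu A ->
  \int[mu]_x (f x * \1_A x * E x)%:E <= \int[mu]_x (f x * \1_A x)%:E.
Proof.
move=> mA mE E_ge0 f_ge0 fA hE.
have [c c_ge0 fc] : exists2 c, (0 <= c)%R & forall x, (f x * \1_A x = c * \1_A x)%R.
  have [[x0 Ax0]|A0] := pselect (exists x0, A x0).
    exists (f x0) => // x; rewrite indicE.
    by have [/set_mem Ax|_] := boolP (x \in A); rewrite ?mulr0 // (fA x x0).
  by exists 0%R => // x; rewrite indicE memNset ?mulr0 // => Ax; apply: A0; exists x.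
have mindic : measurable_fun setT (\1_A : T -> R) by exact: measurable_indic.
under eq_integral do rewrite fc -mulrA EFinM.
under [X in _ <= X]eq_integral do rewrite fc EFinM.
rewrite !ge0_integralZl //; last 3 first.
- exact/measurable_EFinP.
- exact/measurable_EFinP/measurable_funM.
- by move=> x _; rewrite lee_fin mulr_ge0.
rewrite lee_wpmul2l ?lee_fin // integral_indic // setIT; apply: le_trans hE.
rewrite [leRHS]integral_mkcond le_eqVlt; apply/orP; left; apply/eqP.
by apply: eq_integral => x _; rewrite patchE indicE; case: ifP; rewrite ?mul1r ?mul0r.
Qed.

Lemma measurable_sum_in (I : eqType) (s : seq I) (f : I -> T -> R) :
  (forall i, i \in s -> measurable_fun setT (f i)) ->
  measurable_fun setT (fun x => \sum_(i <- s) f i x)%R.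
Proof.
elim: s => [_|i s IH mf].
  by under eq_fun do rewrite big_nil; exact: measurable_cst.
under eq_fun do rewrite big_cons.
apply: measurable_funD; first by apply: mf; exact: mem_head.
by apply: IH => j js; apply: mf; rewrite inE js orbT.
Qed.

Lemma ge0_integral_sum_le (I : eqType) (s : seq I) (f g : I -> T -> R) :
  (forall i, i \in s -> measurable_fun setT (f i)) ->
  (forall i, i \in s -> measurable_fun setT (g i)) ->
  (forall i x, i \in s -> 0 <= f i x)%R -> (forall i x, i \in s -> 0 <= g i x)%R ->
  (forall i, i \in s -> \int[mu]_x (f i x)%:E <= \int[mu]_x (g i x)%:E) ->
  \int[mu]_x (\sum_(i <- s) f i x)%:E <= \int[mu]_x (\sum_(i <- s) g i x)%:E.
Proof.
move=> mf mg f_ge0 g_ge0 fg.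
(* Extending by 0 off s makes the hypotheses of ge0_integral_sum hold for
   every index. *)
pose restr (h : I -> T -> R) i := if i \in s then fun x => (h i x)%:E else cst 0.
have sum_restr h x : (\sum_(i <- s) h i x)%:E = \sum_(i <- s) restr h i x.
  by rewrite -sumEFin big_seq [RHS]big_seq; apply: eq_bigr => i is_; rewrite /restr is_.
have mrestr h : (forall i, i \in s -> measurable_fun setT (h i)) ->
    forall i, measurable_fun setT (restr h i).
  move=> mh i; rewrite /restr; case: ifP => is_; last exact: measurable_cst.
  exact/measurable_EFinP/mh.
have restr_ge0 h : (forall i x, i \in s -> 0 <= h i x)%R ->
    forall i x, setT x -> 0 <= restr h i x.
  by move=> h_ge0 i x _; rewrite /restr; case: ifP => // /h_ge0; rewrite lee_fin.
under eq_integral do rewrite sum_restr.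
under [X in _ <= X]eq_integral do rewrite sum_restr.
rewrite !ge0_integral_sum //; try by [apply: mrestr | apply: restr_ge0].
by apply: lee_sum => i _; rewrite /restr; case: ifP => is_; [exact: fg | exact: lexx].
Qed.

(* F_n is generated by the finitely many cells {history n = s}, and f is
   constant on each of them. *)
Lemma integral_mul_valid_le (e alpha : nat -> T -> R) n (f E : T -> R) :
  (forall j, (1 <= j <= n)%N -> measurable [set x | delta e alpha j x]) ->
  measurable_fun setT E -> (forall x, 0 <= E x)%R -> (forall x, 0 <= f x)%R ->
  history_determined e alpha n f ->
  (forall A, Fsets e alpha n A -> \int[mu]_(x in A) (E x)%:E <= mu A) ->
  \int[mu]_x (f x * E x)%:E <= \int[mu]_x (f x)%:E.
Proof.
move=> mdelta mE E_ge0 f_ge0 fh valid.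
pose cell (s : n.-tuple bool) := history e alpha n @^-1` [set val s].
have mcell s : measurable (cell s) by exact: measurable_history_preimage.
have mf : measurable_fun setT f by exact: measurable_fun_history fh.
have mindic s : measurable_fun setT (\1_(cell s) : T -> R) by exact: measurable_indic.
have decomp x : f x = (\sum_(s : n.-tuple bool) f x * \1_(cell s) x)%R.
  by rewrite -mulr_sumr sum_indic_history mulr1.
under eq_integral do rewrite {1}decomp mulr_suml -sumEFin.
under [X in _ <= X]eq_integral do rewrite decomp -sumEFin.
rewrite !ge0_integral_sum //; last 4 first.
- by move=> s; exact/measurable_EFinP/measurable_funM.
- by move=> s x _; rewrite lee_fin mulr_ge0.
- by move=> s; exact/measurable_EFinP/measurable_funM/mE/measurable_funM.
- by move=> s x _; rewrite lee_fin !mulr_ge0.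
apply: lee_sum => s _; apply: integral_indic_mul_le => //.
- by move=> x y /= hx hy; apply: fh; rewrite hx hy.
- by apply: valid; exists [set val s].
Qed.

End ValidIntegral.

Theorem theorem2 (R : realType) (dT : measure_display) (T : measurableType dT)
  (P : probability T R) (alphaL : R) (theta : nat -> bool)
  (e alpha : nat -> T -> R) (d : R) :
  0 < alphaL < 1 ->
  0 < d <= 1 ->
  (forall t, measurable_fun setT (e t)) ->
  (forall t x, 0 <= e t x) ->
  (forall t x, 0 <= alpha t x) ->
  (* alpha_t is F_(t-1)-measurable *)
  (forall t, (1 <= t)%N -> forall B : set R, measurable B ->
     Fsets e alpha t.-1 (alpha t @^-1` B)) ->
  (* validity: E[e_t | F_(t-1)] <= 1 a.s. for null t, i.e.
     E[e_t 1_A] <= P(A) for every A in F_(t-1) *)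
  (forall t, (1 <= t)%N -> ~~ theta t ->
     forall A, Fsets e alpha t.-1 A ->
     (\int[P]_(x in A) (e t x)%:E <= P A)%E) ->
  forall t, (1 <= t)%N ->
  (\int[P]_x (memFDPstar d theta e alpha t x)%:E <= alphaL%:E)%E ->
  (\int[P]_x (memFDP d theta e alpha t x)%:E <= alphaL%:E)%E.
Proof.
move=> _ /andP[/ltW d_ge0 _] me e_ge0 alpha_ge0 halpha valid t _ star_le.
have mdelta n j : (1 <= j <= n)%N -> measurable [set x | delta e alpha j x].
  by case/andP=> j_gt0 _; exact: measurable_delta.
pose G j x := alpha j x / (d * Rdec d e alpha j.-1 x + 1).
pose nulls := [seq j <- index_iota 1 t.+1 | ~~ theta j].
have nullsP j : j \in nulls -> (1 <= j)%N && ~~ theta j.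
  by rewrite mem_filter mem_index_iota => /andP[-> /andP[->]].
have G_ge0 j x : 0 <= G j x by rewrite divr_ge0 // ltW // Rdec_denom_gt0.
have G_history j : (1 <= j)%N -> history_determined e alpha j.-1 (G j).
  move=> j_gt0 x y hxy; rewrite /G (alpha_history_determined (halpha j j_gt0) hxy).
  by rewrite (Rdec_history_determined _ (leqnn _) hxy).
have mG j : (1 <= j)%N -> measurable_fun setT (G j).
  by move=> j_gt0; exact: measurable_fun_history (mdelta _) (G_history j j_gt0).
apply: le_trans star_le.
apply: (@le_trans _ _ (\int[P]_x (\sum_(j <- nulls) G j x * e j x)%:E)%E).
  apply: ge0_le_integral => //.
  - by move=> x _; rewrite lee_fin memFDP_ge0.
  - exact/measurable_EFinP/(measurable_fun_history (mdelta t))/memFDP_history_determined.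
  - apply/measurable_EFinP/measurable_sum_in => j /nullsP/andP[j_gt0 _].
    exact/measurable_funM/me/mG.
  - by move=> x _; rewrite lee_fin big_filter memFDP_le_sum.
under [X in (_ <= X)%E]eq_integral do rewrite /memFDPstar -big_filter.
apply: ge0_integral_sum_le => [j|j|j x|j x|j] /nullsP/andP[j_gt0 null_j].
- exact/measurable_funM/me/mG.
- exact: mG.
- by rewrite mulr_ge0.
- exact: G_ge0.
- exact: integral_mul_valid_le (mdelta _) (me j) (e_ge0 j) (G_ge0 j)
    (G_history j j_gt0) (valid j j_gt0 null_j).
Qed.
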